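(* Let $\mathbb{P}$ be a class of closed formulas, and let $P$ be a proof in $\mathbf{FI}^{\mathbb{P}}$ of a safety problem $\Pi$. Then $\operatorname{Inv}^\rightarrow(P)$ is a safe inductive invariant of $\Pi$, and if $P$ contains $n\in\mathbb{N}$ instances of the rule (Ind), then $\operatorname{Inv}^\rightarrow(P)$ is a conjunction of $n$ predicates from $\mathbb{P}$.
   Context: A first-order vocabulary $\Sigma$ consists of constant, function and relation symbols; $\Sigma'=\{a' : a\in\Sigma\}$ is a disjoint copy, and for a formula $\varphi$ over $\Sigma$, $\varphi'$ denotes $\varphi$ with every symbol replaced by its primed copy. A safety problem is a triple $(\iota,\tau,\beta)$, where $\iota,\beta$ are closed formulas over $\Sigma$ and $\tau$ is a closed formula over $\Sigma\uplus\Sigma'$. $A\Rightarrow B$ means the implication $A\to B$ is valid. A closed formula $\varphi$ over $\Sigma$ is a safe inductive invariant of $(\iota,\tau,\beta)$ if $\iota\Rightarrow\varphi$, $\varphi\wedge\tau\Rightarrow\varphi'$ and $\varphi\Rightarrow\neg\beta$. Proofs: a proof of $\Pi$ in a system is a finite tree whose nodes are safety problems, whose root is $\Pi$, and in which each node together with its children is an instance of one of the system's inference rules, with side conditions valid. The system $\mathbf{FI}$ has the following rules ($\varphi$ ranges over closed formulas over $\Sigma$): (Ind): no premises; conclusion $(\iota,\tau,\neg\varphi)$; side conditions $\iota\Rightarrow\varphi$ and $\varphi\wedge\tau\Rightarrow\varphi'$. (Cons): premise $(\iota,\tau,\neg\varphi)$; conclusion $(\iota,\tau,\beta)$; side condition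 $\varphi\Rightarrow\neg\beta$. (Inc): premises $(\iota,\tau,\neg\varphi)$ and $(\iota\wedge\varphi,\ \tau\wedge\varphi\wedge\varphi',\ \beta\wedge\varphi)$; conclusion $(\iota,\tau,\beta)$. $\mathbf{FI}^{\mathbb{P}}$ is $\mathbf{FI}$ with applications of (Ind) restricted to $\varphi\in\mathbb{P}$. $\operatorname{Inv}^\rightarrow(P)$ is defined by induction on the proof $P$: if the root of $P$ is the conclusion $(\iota,\tau,\neg\varphi)$ of (Ind), then $\operatorname{Inv}^\rightarrow(P)=\varphi$; if the root is the conclusion of (Cons) whose premise has proof $\tilde P$, then $\operatorname{Inv}^\rightarrow(P)=\operatorname{Inv}^\rightarrow(\tilde P)$; if the root is the conclusion of (Inc) whose premises have proofs $P_1,P_2$, then $\operatorname{Inv}^\rightarrow(P)=\operatorname{Inv}^\rightarrow(P_1)\wedge\operatorname{Inv}^\rightarrow(P_2)$. *)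

From Stdlib Require Import List Bool Arith.
Import ListNotations.
Set Implicit Arguments.

Inductive term (F : Type) : Type :=
  | TVar : nat -> term F
  | TApp : F -> list (term F) -> term F.
Arguments TVar {F} _.

Inductive formula (F R : Type) : Type :=
  | FBot : formula F R
  | FRel : R -> list (term F) -> formula F R
  | FEq : term F -> term F -> formula F R
  | FNot : formula F R -> formula F R
  | FAnd : formula F R -> formula F R -> formula F R
  | FOr : formula F R -> formula F R -> formula F R
  | FImp : formula F R -> formula F R -> formula F R
  | FAll : nat -> formula F R -> formula F R
  | FEx : nat -> formula F R -> formula F R.
Arguments FBot {F R}.
Arguments FRel {F R} _ _.
Arguments FEq {F R} _ _.
Arguments FNot {F R} _.
Arguments FAnd {F R} _ _.
Arguments FOr {F R} _ _.
Arguments FImp {F R} _ _.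
Arguments FAll {F R} _ _.
Arguments FEx {F R} _ _.
Arguments TApp {F} _ _.

Fixpoint term_vars {F} (t : term F) : list nat :=
  match t with
  | TVar x => [x]
  | TApp _ ts => flat_map term_vars ts
  end.

Fixpoint free_vars {F R} (phi : formula F R) : list nat :=
  match phi with
  | FBot => []
  | FRel _ ts => flat_map term_vars ts
  | FEq t1 t2 => term_vars t1 ++ term_vars t2
  | FNot a => free_vars a
  | FAnd a b | FOr a b | FImp a b => free_vars a ++ free_vars b
  | FAll x a | FEx x a => filter (fun y => negb (Nat.eqb y x)) (free_vars a)
  end.

Fixpoint wf_term {F} (ar : F -> nat) (t : term F) : bool :=
  match t with
  | TVar _ => true
  | TApp f ts => Nat.eqb (length ts) (ar f) && forallb (wf_term ar) ts
  end.

Fixpoint wf_formula {F R} (far : F -> nat) (rar : R -> nat) (phi : formula F R) : bool :=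
  match phi with
  | FBot => true
  | FRel r ts => Nat.eqb (length ts) (rar r) && forallb (wf_term far) ts
  | FEq t1 t2 => wf_term far t1 && wf_term far t2
  | FNot a => wf_formula far rar a
  | FAnd a b | FOr a b | FImp a b => wf_formula far rar a && wf_formula far rar b
  | FAll _ a | FEx _ a => wf_formula far rar a
  end.

(** Renaming of symbols (used for the embeddings of Sigma and Sigma' into Sigma ⊎ Sigma'). *)
Fixpoint map_term {F G} (g : F -> G) (t : term F) : term G :=
  match t with
  | TVar x => TVar x
  | TApp f ts => TApp (g f) (map (map_term g) ts)
  end.

Fixpoint map_formula {F R G S} (g : F -> G) (h : R -> S) (phi : formula F R) : formula G S :=
  match phi with
  | FBot => FBot
  | FRel r ts => FRel (h r) (map (map_term g) ts)
  | FEq t1 t2 => FEq (map_term g t1) (map_term g t2)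
  | FNot a => FNot (map_formula g h a)
  | FAnd a b => FAnd (map_formula g h a) (map_formula g h b)
  | FOr a b => FOr (map_formula g h a) (map_formula g h b)
  | FImp a b => FImp (map_formula g h a) (map_formula g h b)
  | FAll x a => FAll x (map_formula g h a)
  | FEx x a => FEx x (map_formula g h a)
  end.

(** * Tarskian semantics (nonempty domains, equality interpreted as identity). *)
Record structure (F R : Type) := {
  dom : Type;
  dom_elt : dom;
  fint : F -> list dom -> dom;
  rint : R -> list dom -> Prop }.

Fixpoint eval_term {F R} (M : structure F R) (rho : nat -> dom M) (t : term F) : dom M :=
  match t with
  | TVar x => rho x
  | TApp f ts => fint M f (map (eval_term M rho) ts)
  end.

Definition upd {D : Type} (rho : nat -> D) (x : nat) (d : D) : nat -> D :=
  fun y => if Nat.eqb y x then d else rho y.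

Fixpoint sat {F R} (M : structure F R) (rho : nat -> dom M) (phi : formula F R) : Prop :=
  match phi with
  | FBot => False
  | FRel r ts => rint M r (map (eval_term M rho) ts)
  | FEq t1 t2 => eval_term M rho t1 = eval_term M rho t2
  | FNot a => ~ sat M rho a
  | FAnd a b => sat M rho a /\ sat M rho b
  | FOr a b => sat M rho a \/ sat M rho b
  | FImp a b => sat M rho a -> sat M rho b
  | FAll x a => forall d : dom M, sat M (upd rho x d) a
  | FEx x a => exists d : dom M, sat M (upd rho x d) a
  end.

Definition valid {F R} (phi : formula F R) : Prop :=
  forall (M : structure F R) (rho : nat -> dom M), sat M rho phi.

Record signature := {
  fsym : Type;
  rsym : Type;
  farity : fsym -> nat;
  rarity : rsym -> nat }.

Definition Form (S : signature) := formula (fsym S) (rsym S).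
(** Formulas over Sigma ⊎ Sigma': [inl a] is the symbol a, [inr a] is its copy a'. *)
Definition Form2 (S : signature) := formula (fsym S + fsym S) (rsym S + rsym S).

Definition sum_arity {A : Type} (ar : A -> nat) (s : A + A) : nat :=
  match s with inl a => ar a | inr a => ar a end.

Definition closed (S : signature) (phi : Form S) : Prop :=
  wf_formula (farity S) (rarity S) phi = true /\ free_vars phi = [].

Definition closed2 (S : signature) (phi : Form2 S) : Prop :=
  wf_formula (sum_arity (farity S)) (sum_arity (rarity S)) phi = true /\ free_vars phi = [].

Definition unprimed (S : signature) (phi : Form S) : Form2 S := map_formula inl inl phi.
Definition primed (S : signature) (phi : Form S) : Form2 S := map_formula inr inr phi.

Definition implies {F R} (A B : formula F R) : Prop := valid (FImp A B).

Record problem (S : signature) := mkProblem {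
  iota : Form S;
  tau : Form2 S;
  beta : Form S }.
Arguments mkProblem {S} _ _ _.

Definition is_safety_problem (S : signature) (Pi : problem S) : Prop :=
  closed (iota Pi) /\ closed2 (tau Pi) /\ closed (beta Pi).

Definition safe_inductive_invariant (S : signature) (phi : Form S) (Pi : problem S) : Prop :=
  closed phi /\
  implies (iota Pi) phi /\
  implies (FAnd (unprimed phi) (tau Pi)) (primed phi) /\
  implies phi (FNot (beta Pi)).

(** * Proof trees of the system FI. Each node carries its safety problem,
    the rule applied and the formula phi of that rule instance. *)
Inductive fi_proof (S : signature) : Type :=
  | PInd : problem S -> Form S -> fi_proof S
  | PCons : problem S -> Form S -> fi_proof S -> fi_proof S
  | PInc : problem S -> Form S -> fi_proof S -> fi_proof S -> fi_proof S.

Definition root (S : signature) (p : fi_proof S) : problem S :=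
  match p with
  | PInd Pi _ | PCons Pi _ _ | PInc Pi _ _ _ => Pi
  end.

Fixpoint is_FIP_proof (S : signature) (Pc : Form S -> Prop) (p : fi_proof S) : Prop :=
  match p with
  | PInd Pi phi =>
      is_safety_problem Pi /\ closed phi /\ Pc phi /\
      beta Pi = FNot phi /\
      implies (iota Pi) phi /\
      implies (FAnd (unprimed phi) (tau Pi)) (primed phi)
  | PCons Pi phi q =>
      is_safety_problem Pi /\ closed phi /\
      root q = mkProblem (iota Pi) (tau Pi) (FNot phi) /\
      implies phi (FNot (beta Pi)) /\
      is_FIP_proof Pc q
  | PInc Pi phi q1 q2 =>
      is_safety_problem Pi /\ closed phi /\
      root q1 = mkProblem (iota Pi) (tau Pi) (FNot phi) /\
      root q2 = mkProblem (FAnd (iota Pi) phi)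
                          (FAnd (FAnd (tau Pi) (unprimed phi)) (primed phi))
                          (FAnd (beta Pi) phi) /\
      is_FIP_proof Pc q1 /\ is_FIP_proof Pc q2
  end.

Fixpoint Inv (S : signature) (p : fi_proof S) : Form S :=
  match p with
  | PInd _ phi => phi
  | PCons _ _ q => Inv q
  | PInc _ _ q1 q2 => FAnd (Inv q1) (Inv q2)
  end.

Fixpoint count_ind (S : signature) (p : fi_proof S) : nat :=
  match p with
  | PInd _ _ => 1
  | PCons _ _ q => count_ind q
  | PInc _ _ q1 q2 => count_ind q1 + count_ind q2
  end.

Inductive is_conj_of {F R} : formula F R -> list (formula F R) -> Prop :=
  | conj_one : forall phi, is_conj_of phi [phi]
  | conj_and : forall a b la lb,
      is_conj_of a la -> is_conj_of b lb -> is_conj_of (FAnd a b) (la ++ lb).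

(* Every rule of FI turns safe inductive invariants of its premises into one of
   its conclusion.  (Ind) makes phi itself an invariant of (iota, tau, ~phi).
   For (Cons), an invariant psi of (iota, tau, ~phi) satisfies psi => phi, and
   phi => ~beta.  For (Inc), an invariant psi1 of (iota, tau, ~phi) again gives
   psi1 => phi, and, by renaming, psi1' => phi'; so psi1 /\ psi1' supplies the
   strengthenings phi and phi' of the second premise, whose invariant psi2 then
   makes psi1 /\ psi2 an invariant of (iota, tau, beta). *)
From Stdlib Require Import List Classical.
Import ListNotations.
Set Implicit Arguments.

Definition reduct {F R G S} (g : F -> G) (h : R -> S) (M : structure G S) :
  structure F R :=
  {| dom := dom M; dom_elt := dom_elt M;
     fint := fun f => fint M (g f); rint := fun r => rint M (h r) |}.

Lemma eval_term_map {F R G S} (g : F -> G) (h : R -> S) (M : structure G S)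
  (rho : nat -> dom M) :
  forall t : term F, eval_term M rho (map_term g t) = eval_term (reduct g h M) rho t.
Proof.
  fix IH 1. intros [x | f ts]; simpl; [reflexivity |].
  f_equal. revert ts. fix IHts 1. intros [| t ts]; simpl; [reflexivity |].
  f_equal; [apply IH | apply IHts].
Qed.

Lemma sat_map_formula {F R G S} (g : F -> G) (h : R -> S) (M : structure G S)
  (phi : formula F R) :
  forall rho, sat M rho (map_formula g h phi) <-> sat (reduct g h M) rho phi.
Proof.
  assert (Hts : forall rho (ts : list (term F)),
    map (eval_term M rho) (map (map_term g) ts) = map (eval_term (reduct g h M) rho) ts).
  { intros rho ts. rewrite map_map. apply map_ext. intros t. apply (eval_term_map g h). }
  induction phi; intros rho; simpl.
  - tauto.
  - rewrite Hts. tauto.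
  - rewrite !(eval_term_map g h). tauto.
  - rewrite IHphi. tauto.
  - rewrite IHphi1, IHphi2. tauto.
  - rewrite IHphi1, IHphi2. tauto.
  - rewrite IHphi1, IHphi2. tauto.
  - split; intros H d; apply IHphi, H.
  - split; intros [d H]; exists d; apply IHphi, H.
Qed.

Lemma implies_map_formula {F R G S} (g : F -> G) (h : R -> S) (a b : formula F R) :
  implies a b -> implies (map_formula g h a) (map_formula g h b).
Proof.
  intros Hab M rho Ha. apply sat_map_formula.
  apply (Hab (reduct g h M)), sat_map_formula, Ha.
Qed.

Lemma implies_FNot_FNot {F R} (a b : formula F R) :
  implies a (FNot (FNot b)) -> implies a b.
Proof. intros H M rho Ha. apply NNPP, H, Ha. Qed.

Lemma closed_FAnd (S : signature) (a b : Form S) :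
  closed a -> closed b -> closed (FAnd a b).
Proof.
  unfold closed; simpl. intros [Wa Fa] [Wb Fb]. rewrite Wa, Wb, Fa, Fb. auto.
Qed.

Section RuleSoundness.

Variable S : signature.
Variables (i : Form S) (t : Form2 S) (b phi psi : Form S).

Lemma safe_inv_Ind :
  closed phi -> implies i phi -> implies (FAnd (unprimed phi) t) (primed phi) ->
  safe_inductive_invariant phi (mkProblem i t (FNot phi)).
Proof.
  intros Hc Hi Ht. repeat split; try apply Hc; auto.
  intros M rho H1 H2. apply H2, H1.
Qed.

Lemma safe_inv_implies :
  safe_inductive_invariant psi (mkProblem i t (FNot phi)) -> implies psi phi.
Proof. intros (_ & _ & _ & Hs). apply implies_FNot_FNot, Hs. Qed.

Lemma safe_inv_Cons :
  safe_inductive_invariant psi (mkProblem i t (FNot phi)) ->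
  implies phi (FNot b) ->
  safe_inductive_invariant psi (mkProblem i t b).
Proof.
  intros Hpsi Hb. pose proof (safe_inv_implies Hpsi) as Hphi.
  destruct Hpsi as (Hc & Hi & Ht & _).
  repeat split; try apply Hc; auto.
  intros M rho H. apply Hb, Hphi, H.
Qed.

Lemma safe_inv_Inc (psi2 : Form S) :
  safe_inductive_invariant psi (mkProblem i t (FNot phi)) ->
  safe_inductive_invariant psi2
    (mkProblem (FAnd i phi) (FAnd (FAnd t (unprimed phi)) (primed phi)) (FAnd b phi)) ->
  safe_inductive_invariant (FAnd psi psi2) (mkProblem i t b).
Proof.
  intros Hpsi (Hc2 & Hi2 & Ht2 & Hs2).
  pose proof (safe_inv_implies Hpsi) as Hphi.
  destruct Hpsi as (Hc & Hi & Ht & _). simpl in *.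
  split; [apply closed_FAnd; auto |]. split; [| split]; simpl.
  - intros M rho Hi0. split; [apply Hi, Hi0 |].
    apply Hi2. split; [exact Hi0 | apply Hphi, Hi, Hi0].
  - intros M rho [[H1 H2] Ht0].
    assert (H1' : sat M rho (primed psi)) by (apply Ht; split; assumption).
    split; [exact H1' |].
    apply Ht2. repeat split; try assumption.
    + exact (implies_map_formula inl inl Hphi M rho H1).
    + exact (implies_map_formula inr inr Hphi M rho H1').
  - intros M rho [H1 H2] Hb0.
    apply (Hs2 M rho H2). split; [exact Hb0 | apply Hphi, H1].
Qed.

End RuleSoundness.

Lemma Inv_safe_inductive_invariant (S : signature) (Pc : Form S -> Prop)
  (p : fi_proof S) :
  is_FIP_proof Pc p -> safe_inductive_invariant (Inv p) (root p).
Proof.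
  induction p as [[i t b] phi | [i t b] phi q IH | [i t b] phi q1 IH1 q2 IH2];
    simpl; intros Hp.
  - destruct Hp as (_ & Hc & _ & -> & Hi & Ht). exact (safe_inv_Ind Hc Hi Ht).
  - destruct Hp as (_ & _ & Hr & Hb & Hq). rewrite Hr in IH.
    exact (safe_inv_Cons (IH Hq) Hb).
  - destruct Hp as (_ & _ & Hr1 & Hr2 & Hq1 & Hq2). rewrite Hr1 in IH1. rewrite Hr2 in IH2.
    exact (safe_inv_Inc (IH1 Hq1) (IH2 Hq2)).
Qed.

Lemma Inv_conj_of_Ind_formulas (S : signature) (Pc : Form S -> Prop)
  (p : fi_proof S) :
  is_FIP_proof Pc p ->
  exists l : list (Form S), length l = count_ind p /\ Forall Pc l /\ is_conj_of (Inv p) l.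
Proof.
  induction p as [Pi phi | Pi phi q IH | Pi phi q1 IH1 q2 IH2]; simpl; intros Hp.
  - destruct Hp as (_ & _ & HP & _). exists [phi]. repeat constructor. exact HP.
  - apply IH, Hp.
  - destruct Hp as (_ & _ & _ & _ & Hq1 & Hq2).
    destruct (IH1 Hq1) as (l1 & L1 & P1 & C1), (IH2 Hq2) as (l2 & L2 & P2 & C2).
    exists (l1 ++ l2). rewrite length_app, L1, L2.
    repeat split; [apply Forall_app; auto | constructor; assumption].
Qed.

Theorem theorem4p6 (S : signature) (Pc : Form S -> Prop)
  (HPc : forall phi, Pc phi -> closed phi)
  (Pi : problem S) (p : fi_proof S)
  (Hp : is_FIP_proof Pc p) (Hroot : root p = Pi) :
  safe_inductive_invariant (Inv p) Pi /\
  (forall n : nat, count_ind p = n ->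
     exists l : list (Form S),
       length l = n /\ Forall Pc l /\ is_conj_of (Inv p) l).
Proof.
  split.
  - subst Pi. exact (Inv_safe_inductive_invariant Pc p Hp).
  - intros n <-. exact (Inv_conj_of_Ind_formulas Pc p Hp).
Qed.
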